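(* Let $\mathfrak g=\mathfrak{sl}_3$, $\lambda_1,\lambda_2\in P^+$ such that $s_1(\lambda_1-\lambda_2)\in P^+$ and $s_1(\lambda_1-\lambda_2)(h_1)>0$, and let $a\in\{1,\ s_1(\lambda_1-\lambda_2)(h_1)\}$. Then for each $\nu\in P^+$ there exists an integer $\ell\ge0$ such that every $(s_{1,1},s_{1,2},s_{1,3},s_{2,2},s_{2,3})\in\mathbf T(\lambda_2)^\nu_{\lambda_1}$ satisfies $s_{1,1}\ge s_{2,2}+\ell$ and $s_{1,3}\ge a-\ell$.
   Context: $\mathfrak g=\mathfrak{sl}_3$ with simple coroots $h_1,h_2$, fundamental weights $\omega_1,\omega_2$, simple reflections $s_1,s_2$, dominant integral weights $P^+$. For $\lambda\in P^+$, $\mathbf T(\lambda)$ is the set of $(s_{1,1},s_{1,2},s_{1,3},s_{2,2},s_{2,3})\in\mathbb Z_{\ge0}^5$ with $s_{1,1}+s_{1,2}+s_{1,3}=\lambda(h_1)+\lambda(h_2)$, $s_{2,2}+s_{2,3}=\lambda(h_2)$, $s_{1,1}\ge s_{2,2}$, $s_{1,1}+s_{1,2}\ge s_{2,2}+s_{2,3}$. For $\lambda,\mu,\nu\in P^+$, $\mathbf T(\lambda)^\nu_\mu$ is the set of elements of $\mathbf T(\lambda)$ satisfying $s_{1,2}\le\mu(h_1)$, $s_{1,3}\le\mu(h_2)$, $s_{2,3}+s_{1,3}\le\mu(h_2)+s_{1,2}$, $\nu(h_1)+\nu(h_2)=\mu(h_1)+\mu(h_2)+s_{1,1}-s_{1,3}-s_{2,3}$,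 and $\nu(h_2)=\mu(h_2)+s_{1,2}+s_{2,2}-s_{1,3}-s_{2,3}$. *)

From Stdlib Require Import ZArith.
Open Scope Z_scope.

(* An integral weight of sl_3 is determined by its values on the simple
   coroots: w = (w(h_1), w(h_2)), i.e. w = w(h_1) omega_1 + w(h_2) omega_2. *)
Definition weight : Type := (Z * Z)%type.
Definition ev1 (w : weight) : Z := fst w.
Definition ev2 (w : weight) : Z := snd w.

Definition dominant (w : weight) : Prop := 0 <= ev1 w /\ 0 <= ev2 w.

Definition wsub (u v : weight) : weight := (ev1 u - ev1 v, ev2 u - ev2 v).

(* simple reflection s_1 : w |-> w - w(h_1) alpha_1, alpha_1 = 2 omega_1 - omega_2 *)
Definition s1 (w : weight) : weight := (- ev1 w, ev2 w + ev1 w).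

Record pattern := mkPattern { s11 : Z; s12 : Z; s13 : Z; s22 : Z; s23 : Z }.

Definition inT (lam : weight) (s : pattern) : Prop :=
  0 <= s11 s /\ 0 <= s12 s /\ 0 <= s13 s /\ 0 <= s22 s /\ 0 <= s23 s /\
  s11 s + s12 s + s13 s = ev1 lam + ev2 lam /\
  s22 s + s23 s = ev2 lam /\
  s11 s >= s22 s /\
  s11 s + s12 s >= s22 s + s23 s.

Definition inTmn (lam mu nu : weight) (s : pattern) : Prop :=
  inT lam s /\
  s12 s <= ev1 mu /\
  s13 s <= ev2 mu /\
  s23 s + s13 s <= ev2 mu + s12 s /\
  ev1 nu + ev2 nu = ev1 mu + ev2 mu + s11 s - s13 s - s23 s /\
  ev2 nu = ev2 mu + s12 s + s22 s - s13 s - s23 s.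

From Stdlib Require Import ZArith Lia.
Open Scope Z_scope.

(* For a pattern s in T(lambda)^nu_mu the two weight equations
   fix the sum s_{1,2} + s_{1,3} of the top row's tail: eliminating s_{1,1}
   with the row-sum relation gives
     3 (s_{1,2} + s_{1,3}) = 2 mu(h_1) + mu(h_2) + 2 lambda(h_1) + lambda(h_2)
                             - 2 nu(h_1) - nu(h_2),
   so this tail c depends only on (lambda, mu, nu).  Take
   l = max(0, lambda(h_1) - c).  Since s_{2,2} <= lambda(h_2) we get
   s_{1,1} - s_{2,2} >= lambda(h_1) - c, and since s_{1,2} <= mu(h_1) we get
   s_{1,3} >= c - mu(h_1).  Hence s_{1,3} >= a - l for every
   a <= lambda(h_1) - mu(h_1).  Finally both admissible values of a satisfy
   this bound, because s_1(mu - lambda)(h_1) = lambda(h_1) - mu(h_1) > 0.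
   The file proves the tail identity, the two pattern bounds for an arbitrary
   a <= lambda(h_1) - mu(h_1), the bound on a, and combines them. *)

Definition tail_of (lam mu nu : weight) : Z :=
  (2 * ev1 mu + ev2 mu + 2 * ev1 lam + ev2 lam - 2 * ev1 nu - ev2 nu) / 3.

Lemma tail_identity (lam mu nu : weight) (s : pattern) :
  inTmn lam mu nu s ->
  3 * (s12 s + s13 s) =
    2 * ev1 mu + ev2 mu + 2 * ev1 lam + ev2 lam - 2 * ev1 nu - ev2 nu.
Proof. unfold inTmn, inT; lia. Qed.

Lemma tail_determined (lam mu nu : weight) (s : pattern) :
  inTmn lam mu nu s -> s12 s + s13 s = tail_of lam mu nu.
Proof.
  intros Hs; unfold tail_of.
  rewrite <- (tail_identity lam mu nu s Hs), Z.mul_comm, Z.div_mul by lia.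
  reflexivity.
Qed.

(* In T(lambda), the gap s_{1,1} - s_{2,2} is at least lambda(h_1) minus the
   tail, because s_{2,2} <= lambda(h_2). *)
Lemma gap_lower_bound (lam : weight) (s : pattern) :
  inT lam s -> s11 s - s22 s >= ev1 lam - (s12 s + s13 s).
Proof. unfold inT; lia. Qed.

Lemma pattern_bounds (lam mu nu : weight) (a : Z) (s : pattern) :
  a <= ev1 lam - ev1 mu -> inTmn lam mu nu s ->
  let l := Z.max 0 (ev1 lam - tail_of lam mu nu) in
  s11 s >= s22 s + l /\ s13 s >= a - l.
Proof.
  intros Ha Hs l.
  pose proof (tail_determined lam mu nu s Hs) as Htail.
  pose proof (gap_lower_bound lam s (proj1 Hs)) as Hgap.
  assert (Hs12 : s12 s <= ev1 mu) by apply Hs.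
  assert (Hord : s11 s >= s22 s) by apply Hs.
  assert (Hs13 : 0 <= s13 s) by apply Hs.
  subst l; lia.
Qed.

Lemma ev1_s1_wsub (mu lam : weight) :
  ev1 (s1 (wsub mu lam)) = ev1 lam - ev1 mu.
Proof. unfold s1, wsub, ev1; simpl; lia. Qed.

Theorem proposition6p5 (lam1 lam2 : weight) (a : Z) :
  dominant lam1 -> dominant lam2 ->
  dominant (s1 (wsub lam1 lam2)) ->
  ev1 (s1 (wsub lam1 lam2)) > 0 ->
  (a = 1 \/ a = ev1 (s1 (wsub lam1 lam2))) ->
  forall nu : weight, dominant nu ->
  exists l : Z, 0 <= l /\
    forall s : pattern, inTmn lam2 lam1 nu s ->
      s11 s >= s22 s + l /\ s13 s >= a - l.
Proof.
  intros _ _ _ Hpos Ha nu _.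
  rewrite ev1_s1_wsub in Hpos, Ha.
  assert (Ha_le : a <= ev1 lam2 - ev1 lam1) by lia.
  exists (Z.max 0 (ev1 lam2 - tail_of lam2 lam1 nu)); split; [lia |].
  intros s Hs; exact (pattern_bounds lam2 lam1 nu a s Ha_le Hs).
Qed.
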